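(* Let $d \ge 1$, $\mathcal{X}=\{0,1\}^d$, $p_+, p_- \in (0,1)$, and let $\phi$ be the randomization on $\mathcal{X}$ that, independently for each coordinate $i$, flips $x_i$ with probability $p_-$ if $x_i = 1$ and with probability $p_+$ if $x_i = 0$, i.e. $\Pr(\phi(x)_i \ne x_i) = p_-^{x_i} p_+^{1-x_i}$. Let $r_a, r_d \ge 0$ be integers, $x \in \mathcal{X}$, $\tilde{x} \in \mathcal{S}_{r_a,r_d}(x)$, $\mathcal{C} = \{i : x_i \ne \tilde{x}_i\}$, and for $q \ge 0$ let $\mathcal{R}_q^{r_a,r_d} = \{ z \in \mathcal{X} : \|x_{\mathcal{C}} - z_{\mathcal{C}}\|_0 = q,\ \|\mathbf{1}-x_{\mathcal{C}}\|_0 = r_a,\ \|x_{\mathcal{C}}\|_0 = r_d \}$. Then for every $q$ and every $z \in \mathcal{R}_q^{r_a,r_d}$, $$\eta_q^{r_a,r_d} := \frac{\Pr(\phi(x) = z)}{\Pr(\phi(\tilde{x}) = z)} = \left[\frac{p_+}{1-p_-}\right]^{q-r_d}\left[\frac{p_-}{1-p_+}\right]^{q-r_a},$$ which in particular is constant on $\mathcal{R}_q^{r_a,r_d}$. Moreover, for fixed $r_a, r_d$, $\eta_q^{r_a,r_d}$ is a monotonically decreasing function of $q$ if $p_- + p_+ < 1$, constant in $q$ if $p_- + p_+ = 1$, and monotonically increasing in $q$ if $p_- + p_+ > 1$.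
   Context: For $x \in \{0,1\}^d$, $\mathcal{S}_{r_a,r_d}(x)$ is the set of $\tilde{x} \in \{0,1\}^d$ with $\sum_i \mathbb{I}(\tilde{x}_i = x_i - 1) = r_d$ and $\sum_i \mathbb{I}(\tilde{x}_i = x_i + 1) = r_a$ (obtained from $x$ by deleting exactly $r_d$ ones and adding exactly $r_a$ ones). $x_{\mathcal{C}}$ is the restriction of $x$ to the coordinates in $\mathcal{C}$, $\|\cdot\|_0$ counts nonzero entries, $\mathbf{1}$ is the all-ones vector. *)

From mathcomp Require Import all_boot all_order all_algebra.
Set Implicit Arguments. Unset Strict Implicit. Unset Printing Implicit Defensive.
Import Order.TTheory GRing.Theory Num.Theory.
Local Open Scope ring_scope.

(* Points of X = {0,1}^d are boolean vectors  'I_d -> bool  (true = 1). *)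

Definition flipprob {R : ringType} (pm pp : R) (b : bool) : R :=
  if b then pm else pp.

Definition Pr_phi {R : ringType} (d : nat) (pm pp : R) (x z : 'I_d -> bool) : R :=
  \prod_(i < d) (if z i == x i then 1 - flipprob pm pp (x i)
                 else flipprob pm pp (x i)).

Definition in_S (d ra rd : nat) (x xt : 'I_d -> bool) : Prop :=
  #|[set i | x i && ~~ xt i]| = rd /\ #|[set i | ~~ x i && xt i]| = ra.

Definition Cset (d : nat) (x xt : 'I_d -> bool) : {set 'I_d} :=
  [set i | x i != xt i].

Definition in_R (d ra rd q : nat) (x xt z : 'I_d -> bool) : Prop :=
  [/\ #|[set i in Cset x xt | x i != z i]| = q,
      #|[set i in Cset x xt | ~~ x i]| = ra
    & #|[set i in Cset x xt | x i]| = rd].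

From mathcomp Require Import all_boot all_order all_algebra.
From mathcomp Require Import ring.
Import Order.TTheory GRing.Theory Num.Theory.
Local Open Scope ring_scope.

(* The likelihood ratio factors over the coordinates.  Outside C the two
   factors coincide; inside C each coordinate contributes one of the odds
   A = p_+/(1-p_-), B = p_-/(1-p_+) or their inverses, so the ratio is
   A^a B^b with integer exponents a, b counting coordinates of C, namely
   a = q - r_d and b = q - r_a.  Hence eta_q = eta_0 (A B)^q, and
   A B - 1 has the sign of p_- + p_+ - 1. *)

Lemma cardz_set_sum (I : finType) (P : pred I) :
  #|[set i | P i]|%:Z = \sum_i (P i)%:R.
Proof.
rewrite cardsE -sum1_card -natz natr_sum big_mkcond /=.
by apply: eq_bigr => i _; rewrite unfold_in; case: (P i).
Qed.

Lemma prodfz_exp (F : fieldType) (I : finType) (a : F) (e : I -> int) :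
  a != 0 -> \prod_i a ^ e i = a ^ (\sum_i e i).
Proof.
by move=> a_neq0; rewrite (big_morph _ (fun m n => expfzDr m n a_neq0) (expr0z _)).
Qed.

Lemma expfz_addn_nat (F : fieldType) (a : F) (m k : nat) (r : int) :
  a != 0 -> a ^ ((m + k)%N%:Z - r) = a ^ (m%:Z - r) * a ^+ k.
Proof. by move=> a_neq0; rewrite PoszD addrAC [LHS]expfzDr // exprnP. Qed.

Definition flip_lik {R : nzRingType} (pm pp : R) (b c : bool) : R :=
  if c == b then 1 - flipprob pm pp b else flipprob pm pp b.

Lemma Pr_phiE (R : nzRingType) d (pm pp : R) (x z : 'I_d -> bool) :
  Pr_phi pm pp x z = \prod_i flip_lik pm pp (x i) (z i).
Proof. by []. Qed.

Definition eta {F : fieldType} (pm pp : F) (ra rd q : nat) : F :=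
  (pp / (1 - pm)) ^ (q%:Z - rd%:Z) * (pm / (1 - pp)) ^ (q%:Z - ra%:Z).

Section LikelihoodRatio.

Variables (F : fieldType) (pm pp : F).
Hypotheses (pm_neq0 : pm != 0) (pp_neq0 : pp != 0).
Hypotheses (pm_neq1 : 1 - pm != 0) (pp_neq1 : 1 - pp != 0).

Let A := pp / (1 - pm).
Let B := pm / (1 - pp).

Lemma odds_plus_neq0 : A != 0.
Proof. by rewrite mulf_neq0 ?invr_eq0. Qed.

Lemma odds_minus_neq0 : B != 0.
Proof. by rewrite mulf_neq0 ?invr_eq0. Qed.

Lemma flip_lik_ratio (bx bt bz : bool) :
  flip_lik pm pp bx bz / flip_lik pm pp bt bz =
  A ^ (((bx != bt) && (bx != bz))%:R - ((bx != bt) && bx)%:R) *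
  B ^ (((bx != bt) && (bx != bz))%:R - ((bx != bt) && ~~ bx)%:R).
Proof.
rewrite /A /B /flip_lik /flipprob.
by case: bx; case: bt; case: bz => /=;
  rewrite ?subrr ?subr0 ?sub0r ?expr0z ?expr1z ?exprN1 ?mulr1 ?mul1r;
  field; rewrite ?pm_neq0 ?pp_neq0 ?pm_neq1 ?pp_neq1.
Qed.

Lemma Pr_phi_ratio d (x xt z : 'I_d -> bool) (ra rd q : nat) :
  in_R ra rd q x xt z ->
  Pr_phi pm pp x z / Pr_phi pm pp xt z = eta pm pp ra rd q.
Proof.
case=> <- <- <-; rewrite !Pr_phiE -prodf_div.
under eq_bigr do rewrite flip_lik_ratio.
rewrite big_split /= !prodfz_exp ?odds_plus_neq0 ?odds_minus_neq0 //.
rewrite /eta !cardz_set_sum -!sumrB; congr (_ ^ _ * _ ^ _);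
  by apply: eq_bigr => i _; rewrite /Cset !inE; case: (x i); case: (xt i); case: (z i).
Qed.

Lemma eta_shift (ra rd q k : nat) :
  eta pm pp ra rd (q + k) = eta pm pp ra rd q * (A * B) ^+ k.
Proof.
by rewrite /eta !expfz_addn_nat ?odds_plus_neq0 ?odds_minus_neq0 // mulrACA -exprMn.
Qed.

End LikelihoodRatio.

Section EtaMonotone.

Variables (R : realFieldType) (pm pp : R).
Hypotheses (pm_gt0 : 0 < pm) (pm_lt1 : pm < 1) (pp_gt0 : 0 < pp) (pp_lt1 : pp < 1).
Variables (ra rd : nat).

Let A := pp / (1 - pm).
Let B := pm / (1 - pp).

Let pm_neq0 : pm != 0. Proof. by rewrite gt_eqF. Qed.
Let pp_neq0 : pp != 0. Proof. by rewrite gt_eqF. Qed.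
Let pm_neq1 : 1 - pm != 0. Proof. by rewrite gt_eqF ?subr_gt0. Qed.
Let pp_neq1 : 1 - pp != 0. Proof. by rewrite gt_eqF ?subr_gt0. Qed.

Lemma odds_product_subr1 : A * B - 1 = (pm + pp - 1) / ((1 - pm) * (1 - pp)).
Proof. by rewrite /A /B; field; rewrite pm_neq1 pp_neq1. Qed.

Let denom_gt0 : 0 < ((1 - pm) * (1 - pp))^-1.
Proof. by rewrite invr_gt0 mulr_gt0 ?subr_gt0. Qed.

Lemma odds_product_lt1 : (A * B < 1) = (pm + pp < 1).
Proof. by rewrite -subr_lt0 odds_product_subr1 pmulr_llt0 // subr_lt0. Qed.

Lemma odds_product_gt1 : (1 < A * B) = (1 < pm + pp).
Proof. by rewrite -subr_gt0 odds_product_subr1 pmulr_lgt0 // subr_gt0. Qed.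

Lemma odds_product_eq1 : (A * B == 1) = (pm + pp == 1).
Proof. by rewrite -subr_eq0 odds_product_subr1 mulf_eq0 (gt_eqF denom_gt0) orbF subr_eq0. Qed.

Lemma eta_gt0 q : 0 < eta pm pp ra rd q.
Proof. by rewrite mulr_gt0 // exprz_gt0 // divr_gt0 ?subr_gt0. Qed.

Lemma eta_decreasingE q1 q2 : (q1 < q2)%N ->
  (eta pm pp ra rd q2 < eta pm pp ra rd q1) = (pm + pp < 1).
Proof.
move=> lt_q; rewrite -(subnKC (ltnW lt_q)) eta_shift // gtr_pMr ?eta_gt0 //.
by rewrite expr_lt1 ?subn_gt0 ?odds_product_lt1 // mulr_ge0 // divr_ge0 ?subr_ge0 ?ltW.
Qed.

Lemma eta_increasingE q1 q2 : (q1 < q2)%N ->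
  (eta pm pp ra rd q1 < eta pm pp ra rd q2) = (1 < pm + pp).
Proof.
move=> lt_q; rewrite -(subnKC (ltnW lt_q)) eta_shift // ltr_pMr ?eta_gt0 //.
by rewrite expr_gt1 ?subn_gt0 ?odds_product_gt1 // mulr_ge0 // divr_ge0 ?subr_ge0 ?ltW.
Qed.

Lemma eta_constant q : pm + pp = 1 -> eta pm pp ra rd q = eta pm pp ra rd 0.
Proof.
move/eqP; rewrite -odds_product_eq1 => /eqP AB1.
by rewrite -[q]add0n eta_shift // AB1 expr1n mulr1.
Qed.

End EtaMonotone.

Theorem proposition3 (R : realFieldType) (d : nat) (pm pp : R)
  (hd : (0 < d)%N)
  (hpm : 0 < pm < 1) (hpp : 0 < pp < 1)
  (ra rd : nat) (x xt : 'I_d -> bool) (hS : in_S ra rd x xt) :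
  (forall (q : nat) (z : 'I_d -> bool), in_R ra rd q x xt z ->
     Pr_phi pm pp x z / Pr_phi pm pp xt z =
       (pp / (1 - pm)) ^ (q%:Z - rd%:Z) * (pm / (1 - pp)) ^ (q%:Z - ra%:Z))
  /\ (pm + pp < 1 ->
      forall (q1 q2 : nat) (z1 z2 : 'I_d -> bool),
        in_R ra rd q1 x xt z1 -> in_R ra rd q2 x xt z2 -> (q1 < q2)%N ->
        Pr_phi pm pp x z2 / Pr_phi pm pp xt z2 < Pr_phi pm pp x z1 / Pr_phi pm pp xt z1)
  /\ (pm + pp = 1 ->
      forall (q1 q2 : nat) (z1 z2 : 'I_d -> bool),
        in_R ra rd q1 x xt z1 -> in_R ra rd q2 x xt z2 ->
        Pr_phi pm pp x z2 / Pr_phi pm pp xt z2 = Pr_phi pm pp x z1 / Pr_phi pm pp xt z1)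
  /\ (1 < pm + pp ->
      forall (q1 q2 : nat) (z1 z2 : 'I_d -> bool),
        in_R ra rd q1 x xt z1 -> in_R ra rd q2 x xt z2 -> (q1 < q2)%N ->
        Pr_phi pm pp x z1 / Pr_phi pm pp xt z1 < Pr_phi pm pp x z2 / Pr_phi pm pp xt z2).
Proof.
case/andP: hpm => pm_gt0 pm_lt1; case/andP: hpp => pp_gt0 pp_lt1.
have ratio q z : in_R ra rd q x xt z ->
    Pr_phi pm pp x z / Pr_phi pm pp xt z = eta pm pp ra rd q.
  by apply: Pr_phi_ratio; rewrite gt_eqF ?subr_gt0.
split; first exact: ratio.
split; [|split] => hsum q1 q2 z1 z2 /ratio-> /ratio->.
- by move=> lt_q; rewrite eta_decreasingE.
- by rewrite !eta_constant.
- by move=> lt_q; rewrite eta_increasingE.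
Qed.
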